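(* For two integer matrices $M,M'\in\mathrm{Mat}(2,\mathbb{Z})$, the following are equivalent: (a) for all integers $n\ge2$, the reductions mod $n$ of $M$ and $M'$ are $\mathrm{Mat}(2,\mathbb{Z}_n)^\times$-conjugate; (b) $\det(M)=\det(M')$, $\mathrm{trace}(M)=\mathrm{trace}(M')$ and $\mathrm{mgcd}(M)=\mathrm{mgcd}(M')$.
   Context: For $M=\begin{pmatrix}a&b\\c&d\end{pmatrix}$, $\mathrm{mgcd}(M)=\gcd(b,c,d-a)$, a non-negative integer, equal to $0$ iff $b=c=d-a=0$. $\mathrm{Mat}(2,\mathbb{Z}_n)^\times$ is the group of invertible $2\times2$ matrices over $\mathbb{Z}_n=\mathbb{Z}/n\mathbb{Z}$. *)

From mathcomp Require Import all_boot all_order all_algebra.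
Set Implicit Arguments. Unset Strict Implicit. Unset Printing Implicit Defensive.
Import GRing.Theory Num.Theory.
Local Open Scope ring_scope.

Definition i0 : 'I_2 := ord0.
Definition i1 : 'I_2 := ord_max.

Definition mgcd (M : 'M[int]_2) : int :=
  gcdz (gcdz (M i0 i1) (M i1 i0)) (M i1 i1 - M i0 i0).

Definition redmx (n : nat) (M : 'M[int]_2) : 'M['Z_n]_2 :=
  map_mx (fun z : int => z%:~R) M.

Definition mx_conj (R : comUnitRingType) (A B : 'M[R]_2) : Prop :=
  exists P : 'M[R]_2, P \in unitmx /\ P *m A *m invmx P = B.

From mathcomp Require Import all_boot all_order all_algebra.
From mathcomp Require Import ring zify.
Set Implicit Arguments. Unset Strict Implicit. Unset Printing Implicit Defensive.
Import GRing.Theory Num.Theory.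
Local Open Scope ring_scope.

(* Write M = a + g N with g = mgcd M, so that N is primitive (mgcd N = 1).
   A primitive N has, modulo every n, a cyclic vector v: one for which
   det [v, N v] is a unit mod n, found by choosing v prime by prime so that
   the binary form det [v, N v] does not vanish.  Hence N is conjugate mod n
   to the companion matrix of its characteristic polynomial.  If M and M'
   have the same trace and determinant, comparing discriminants gives
   tr N = tr N' mod 2, hence a = a' mod g; after shifting N' by a scalar, the
   two primitive parts have the same characteristic polynomial.  Conversely,
   det and tr are conjugacy invariants, and M is scalar mod k exactly when k
   divides mgcd M. *)

Definition mk2 {R : Type} (a b c d : R) : 'M[R]_2 :=
  \matrix_(i < 2, j < 2) if i == i0 then (if j == i0 then a else b)
                          else (if j == i0 then c else d).

Lemma ord2P (i : 'I_2) : i = i0 \/ i = i1.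
Proof. by case: i => [[|[|k]] Hk]; [left|right|]; try apply: val_inj. Qed.

Lemma mk2E (R : Type) (M : 'M[R]_2) :
  M = mk2 (M i0 i0) (M i0 i1) (M i1 i0) (M i1 i1).
Proof.
by apply/matrixP => i j; rewrite mxE; case: (ord2P i) => ->; case: (ord2P j) => ->.
Qed.

Lemma mk2_mul (R : pzSemiRingType) (a b c d a' b' c' d' : R) :
  mk2 a b c d *m mk2 a' b' c' d' =
  mk2 (a * a' + b * c') (a * b' + b * d') (c * a' + d * c') (c * b' + d * d').
Proof.
apply/matrixP => i j; rewrite !mxE !big_ord_recl big_ord0 addr0 !mxE.
by case: (ord2P i) => ->; case: (ord2P j) => ->.
Qed.

Lemma det_mk2 (R : comPzRingType) (a b c d : R) :
  \det (mk2 a b c d) = a * d - b * c.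
Proof.
rewrite (expand_det_row _ i0) !big_ord_recl big_ord0 addr0 /cofactor !mxE /=.
by rewrite !det_mx11 !mxE /= expr0 expr1 !mul1r mulN1r mulrN.
Qed.

Lemma tr_mk2 (R : pzSemiRingType) (a b c d : R) : \tr (mk2 a b c d) = a + d.
Proof. by rewrite /mxtrace !big_ord_recl big_ord0 addr0 !mxE. Qed.

Lemma det2 (R : comPzRingType) (M : 'M[R]_2) :
  \det M = M i0 i0 * M i1 i1 - M i0 i1 * M i1 i0.
Proof. by rewrite {1}(mk2E M) det_mk2. Qed.

Lemma tr2 (R : pzSemiRingType) (M : 'M[R]_2) : \tr M = M i0 i0 + M i1 i1.
Proof. by rewrite {1}(mk2E M) tr_mk2. Qed.

Lemma scalar_mk2 (R : pzSemiRingType) (a : R) : a%:M = mk2 a 0 0 a :> 'M[R]_2.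
Proof.
by apply/matrixP => i j; rewrite !mxE; case: (ord2P i) => ->; case: (ord2P j) => ->.
Qed.

Lemma is_scalar_mx2 (R : pzSemiRingType) (A : 'M[R]_2) :
  is_scalar_mx A = [&& A i0 i1 == 0, A i1 i0 == 0 & A i1 i1 == A i0 i0].
Proof.
apply/is_scalar_mxP/and3P => [[a ->] | [/eqP b /eqP c /eqP d]].
  by rewrite scalar_mk2 !mxE /= !eqxx.
by exists (A i0 i0); rewrite scalar_mk2 {1}(mk2E A) b c d.
Qed.

Lemma tr_affine2 (R : pzSemiRingType) (a g : R) (N : 'M[R]_2) :
  \tr (a%:M + g *: N) = a *+ 2 + g * \tr N.
Proof. by rewrite mxtraceD mxtrace_scalar mxtraceZ. Qed.

Lemma det_affine2 (R : comPzRingType) (a g : R) (N : 'M[R]_2) :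
  \det (a%:M + g *: N) = a ^+ 2 + a * g * \tr N + g ^+ 2 * \det N.
Proof. by rewrite !det2 tr2 !mxE /=; ring. Qed.

Section Conjugation.
Variable R : comUnitRingType.
Implicit Types A B C P : 'M[R]_2.

Lemma mx_conjP A B P : P \in unitmx -> P *m A = B *m P -> mx_conj A B.
Proof. by move=> uP PA_BP; exists P; split => //; rewrite PA_BP mulmxK. Qed.

Lemma mx_conj_refl A : mx_conj A A.
Proof. by apply: (@mx_conjP _ _ 1%:M); rewrite ?unitmx1 // mul1mx mulmx1. Qed.

Lemma mx_conj_sym A B : mx_conj A B -> mx_conj B A.
Proof.
case=> P [uP <-]; apply: (@mx_conjP _ _ (invmx P)); first by rewrite unitmx_inv.
by rewrite !mulmxA mulVmx // mul1mx.
Qed.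

Lemma mx_conj_trans A B C : mx_conj A B -> mx_conj B C -> mx_conj A C.
Proof.
case=> P [uP <-] [Q [uQ <-]]; apply: (@mx_conjP _ _ (Q *m P)).
  by rewrite unitmx_mul uQ uP.
by rewrite !mulmxA mulmxKV // mulmxKV.
Qed.

Lemma mx_conj_det A B : mx_conj A B -> \det A = \det B.
Proof.
case=> P [uP <-]; have udetP : \det P \is a GRing.unit by rewrite -unitmxE.
by rewrite !det_mulmx det_inv mulrC mulrA mulVr ?mul1r.
Qed.

Lemma mx_conj_tr A B : mx_conj A B -> \tr A = \tr B.
Proof. by case=> P [uP <-]; rewrite mxtrace_mulC mulmxA mulVmx // mul1mx. Qed.

Lemma mx_conj_scalar A B : mx_conj A B -> is_scalar_mx A -> is_scalar_mx B.
Proof.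
by case=> P [uP <-] /is_scalar_mxP[a ->]; rewrite scalar_mxC mulmxK // scalar_mx_is_scalar.
Qed.

Lemma mx_conj_affine (a g : R) A B :
  mx_conj A B -> mx_conj (a%:M + g *: A) (a%:M + g *: B).
Proof.
case=> P [uP <-]; exists P; split => //.
by rewrite mulmxDr mulmxDl scalar_mxC mulmxK // -scalemxAr -scalemxAl.
Qed.

End Conjugation.

Lemma intr_eq0_dvd (R : pzRingType) (n : nat) :
  (forall k : nat, (k%:R == 0 :> R) = (n %| k)%N) ->
  forall z : int, (z%:~R == 0 :> R) = (n %| `|z|)%N.
Proof.
by move=> natr_eq0 [k | k]; rewrite ?NegzE ?mulrNz ?oppr_eq0 natr_eq0.
Qed.

Lemma intrZp_eq0 (n : nat) (z : int) : (1 < n)%N ->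
  (z%:~R == 0 :> 'Z_n) = (n %| `|z|)%N.
Proof.
move=> n_gt1; apply: intr_eq0_dvd => k.
by rewrite -(inj_eq val_inj) /= val_Zp_nat.
Qed.

Lemma intrFp_eq0 (p : nat) (z : int) : prime p ->
  (z%:~R == 0 :> 'F_p) = (p %| `|z|)%N.
Proof.
move=> p_pr; apply: intr_eq0_dvd => k.
by rewrite -(inj_eq val_inj) /= val_Fp_nat.
Qed.

Lemma intrZp_unit (n : nat) (z : int) : (1 < n)%N ->
  (z%:~R \is a @GRing.unit 'Z_n) = coprime n `|z|.
Proof. by move=> n_gt1; case: z => k; rewrite ?NegzE ?mulrNz ?unitrN unitZpE. Qed.

Lemma eq_intr_Zp (x y : int) :
  (forall n : nat, (2 <= n)%N -> x%:~R = y%:~R :> 'Z_n) -> x = y.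
Proof.
move=> eq_xy; apply/eqP; rewrite -subr_eq0 -absz_eq0.
have := eq_xy `|x - y|.+2 isT; move/eqP; rewrite -subr_eq0 -intrB intrZp_eq0 //.
apply: contraLR; rewrite -lt0n => xy_gt0; apply/negP => /(dvdn_leq xy_gt0) /ltnW.
by rewrite ltnn.
Qed.

Lemma det_redmx (n : nat) (M : 'M[int]_2) : \det (redmx n M) = (\det M)%:~R.
Proof. exact: det_map_mx. Qed.

Lemma tr_redmx (n : nat) (M : 'M[int]_2) : \tr (redmx n M) = (\tr M)%:~R.
Proof. exact: trace_map_mx. Qed.

Lemma redmx_affine (n : nat) (a g : int) (N : 'M[int]_2) :
  redmx n (a%:M + g *: N) = (a%:~R)%:M + g%:~R *: redmx n N.
Proof. by rewrite /redmx map_mxD map_scalar_mx map_mxZ. Qed.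

Lemma redmx_mx_conj (n : nat) (A B Q : 'M[int]_2) : (1 < n)%N ->
  coprime n `|\det Q| -> Q *m A = B *m Q -> mx_conj (redmx n A) (redmx n B).
Proof.
move=> n_gt1 coQ QA_BQ; apply: (@mx_conjP _ _ _ (redmx n Q)).
  by rewrite unitmxE det_redmx intrZp_unit.
by rewrite /redmx -!map_mxM QA_BQ.
Qed.

Lemma redmx_scalar (k : nat) (M : 'M[int]_2) : (1 < k)%N ->
  is_scalar_mx (redmx k M) = (k %| `|mgcd M|)%N.
Proof.
move=> k_gt1; rewrite is_scalar_mx2 !mxE -[_ == (M i0 i0)%:~R]subr_eq0 -intrB.
rewrite !intrZp_eq0 // -[X in _ = X]/(k%:Z %| mgcd M)%Z.
by rewrite /mgcd !dvdz_gcd -andbA.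
Qed.

Lemma prime_dvd_prod_primes (n p : nat) (P : pred nat) :
  prime p -> (p %| n)%N -> (0 < n)%N ->
  (p %| \prod_(q <- primes n | P q) q)%N = P p.
Proof.
move=> p_pr p_dvd_n n_gt0; rewrite Euclid_dvd_prod // big_has_cond.
apply/hasP/idP => [[q] | Pp].
  rewrite mem_primes => /and3P[q_pr _ _] /andP[Pq].
  by rewrite dvdn_prime2 // => /eqP ->.
by exists p; rewrite ?mem_primes ?p_pr ?n_gt0 ?p_dvd_n //= Pp dvdnn.
Qed.

Lemma binary_form_ndvd (p : nat) (q r e x y : int) : prime p ->
  ~~ [&& p %| `|q|, p %| `|r| & p %| `|e|]%N ->
  (p %| `|x|)%N = (p %| `|r|)%N && ~~ (p %| `|q|)%N ->
  (p %| `|y|)%N = ~~ (p %| `|r|)%N ->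
  ~~ (p %| `|(r * x ^+ 2 + e * x * y - q * y ^+ 2)%R|)%N.
Proof.
move=> p_pr not_all px py; rewrite -intrFp_eq0 // intrB intrD !intrM.
move: not_all px py; rewrite -!intrFp_eq0 //.
case: (r%:~R =P 0) => [-> | /eqP r_neq0] /=; last first.
  move=> _ /negbT x_neq0 /eqP ->.
  by rewrite !(mulr0, subr0, addr0) !mulf_neq0.
case: (q%:~R =P 0) => [-> | /eqP q_neq0] /= e_neq0; last first.
  move=> /eqP -> /negbT y_neq0.
  by rewrite !(mulr0, mul0r, add0r) oppr_eq0 !mulf_neq0.
move=> /negbT x_neq0 /negbT y_neq0.
by rewrite !(mul0r, add0r, subr0) !mulf_neq0.
Qed.

Lemma prime_ndvd_coprime (m n : nat) : (0 < m)%N ->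
  (forall p, prime p -> (p %| m)%N -> ~~ (p %| n)%N) -> coprime m n.
Proof.
move=> m_gt0 ndvd; rewrite /coprime eqn_leq gcdn_gt0 m_gt0 andbT leqNgt.
apply/negP => /pdiv_prime p_pr; have p_dvd_gcd := pdiv_dvd (gcdn m n).
move: (ndvd _ p_pr (dvdn_trans p_dvd_gcd (dvdn_gcdl m n))).
by rewrite (dvdn_trans p_dvd_gcd (dvdn_gcdr m n)).
Qed.

Lemma binary_form_coprime (n : nat) (q r e : int) : (0 < n)%N ->
  coprime n `|gcdz (gcdz q r) e| ->
  exists x y : int, coprime n `|(r * x ^+ 2 + e * x * y - q * y ^+ 2)%R|.
Proof.
move=> n_gt0 co_n_qre.
pose x := (\prod_(l <- primes n | (l %| `|r|) && ~~ (l %| `|q|)) l)%N.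
pose y := (\prod_(l <- primes n | ~~ (l %| `|r|)) l)%N.
exists x%:Z, y%:Z; apply: prime_ndvd_coprime => // p p_pr p_dvd_n.
apply: binary_form_ndvd => //; last 2 first.
- exact: prime_dvd_prod_primes.
- exact: prime_dvd_prod_primes.
have := coprime_dvdl p_dvd_n co_n_qre; rewrite prime_coprime //.
by rewrite -[(p %| _)%N]/(p%:Z %| _)%Z !dvdz_gcd -andbA.
Qed.

Definition companion2 {R : pzRingType} (t D : R) : 'M[R]_2 := mk2 0 (- D) 1 t.

(* The columns are a vector v = (x, y) and its image N v. *)
Definition cyclic_basis {R : pzRingType} (N : 'M[R]_2) (x y : R) : 'M[R]_2 :=
  mk2 x (N i0 i0 * x + N i0 i1 * y) y (N i1 i0 * x + N i1 i1 * y).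

Lemma cyclic_basisM (R : comPzRingType) (N : 'M[R]_2) (x y : R) :
  N *m cyclic_basis N x y = cyclic_basis N x y *m companion2 (\tr N) (\det N).
Proof. by rewrite /cyclic_basis {1}(mk2E N) !mk2_mul det2 tr2; congr mk2; ring. Qed.

Lemma det_cyclic_basis (R : comPzRingType) (N : 'M[R]_2) (x y : R) :
  \det (cyclic_basis N x y) =
  N i1 i0 * x ^+ 2 + (N i1 i1 - N i0 i0) * x * y - N i0 i1 * y ^+ 2.
Proof. by rewrite det_mk2; ring. Qed.

Lemma redmx_conj_companion (n : nat) (N : 'M[int]_2) :
  (1 < n)%N -> coprime n `|mgcd N| ->
  mx_conj (redmx n N) (redmx n (companion2 (\tr N) (\det N))).
Proof.
move=> n_gt1 co_n_N; have [x [y co_n_det]] := binary_form_coprime (ltnW n_gt1) co_n_N.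
apply/mx_conj_sym/(@redmx_mx_conj _ _ _ (cyclic_basis N x y)) => //.
  by rewrite det_cyclic_basis.
by rewrite cyclic_basisM.
Qed.

Lemma redmx_conj_affine (n : nat) (a g : int) (N N' : 'M[int]_2) :
  (1 < n)%N -> coprime n `|mgcd N| -> coprime n `|mgcd N'| ->
  \tr N = \tr N' -> \det N = \det N' ->
  mx_conj (redmx n (a%:M + g *: N)) (redmx n (a%:M + g *: N')).
Proof.
move=> n_gt1 co_N co_N' trE detE; rewrite !redmx_affine; apply: mx_conj_affine.
apply: mx_conj_trans (redmx_conj_companion n_gt1 co_N) _.
by rewrite trE detE; apply/mx_conj_sym/redmx_conj_companion.
Qed.

Definition primitive_part (M : 'M[int]_2) : 'M[int]_2 :=
  mk2 0 (M i0 i1 %/ mgcd M)%Z (M i1 i0 %/ mgcd M)%Z ((M i1 i1 - M i0 i0) %/ mgcd M)%Z.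

Lemma primitive_partE (M : 'M[int]_2) :
  M = (M i0 i0)%:M + mgcd M *: primitive_part M.
Proof.
have dvd_b : (mgcd M %| M i0 i1)%Z by apply: dvdz_trans (dvdz_gcdl _ _) (dvdz_gcdl _ _).
have dvd_c : (mgcd M %| M i1 i0)%Z by apply: dvdz_trans (dvdz_gcdl _ _) (dvdz_gcdr _ _).
have dvd_da : (mgcd M %| M i1 i1 - M i0 i0)%Z by apply: dvdz_gcdr.
rewrite {1}(mk2E M) scalar_mk2 /primitive_part; apply/matrixP => i j; rewrite !mxE.
case: (ord2P i) => ->; case: (ord2P j) => -> /=; rewrite ?mulr0 ?add0r ?addr0 //.
all: rewrite mulrC divzK //.
by rewrite addrC subrK.
Qed.

Lemma mgcd_affine (a g : int) (N : 'M[int]_2) :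
  mgcd (a%:M + g *: N) = `|g|%:Z * mgcd N.
Proof.
rewrite /mgcd !mxE /= !mulr0n !mulr1n !add0r.
have ->: a + g * N i1 i1 - (a + g * N i0 i0) = g * (N i1 i1 - N i0 i0) by ring.
by rewrite /gcdz !abszM -!muln_gcdr /= PoszM.
Qed.

Lemma mgcd_primitive_part (M : 'M[int]_2) :
  mgcd M != 0 -> mgcd (primitive_part M) = 1.
Proof.
move=> g_neq0; have := congr1 mgcd (primitive_partE M).
rewrite mgcd_affine -[`|mgcd M|%:Z]/(mgcd M) -{1}[mgcd M]mulr1.
by move=> /(mulfI g_neq0).
Qed.

Lemma dvdz2_sub_of_sqr (t t' : int) : (4 %| t ^+ 2 - t' ^+ 2)%Z -> (2 %| t - t')%Z.
Proof.
case/dvdzP => m sqr_diff; apply/dvdzP; exists ((t - t') %/ 2)%Z.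
have := divz_eq (t - t') 2.
set q := ((t - t') %/ 2)%Z; set r := ((t - t') %% 2)%Z => tE.
have [r0 | r1] : r = 0 \/ r = 1 by rewrite /r; lia.
  by rewrite tE r0 addr0.
have : 2 * (2 * (q ^+ 2 + q * t' + q) + t') + 1 = m * 4.
  by rewrite -sqr_diff (_ : t = t' + q * 2 + r) ?r1; [ring | lia].
lia.
Qed.

Lemma affine_params_shift (a a' g t t' D D' : int) : g != 0 ->
  a *+ 2 + g * t = a' *+ 2 + g * t' ->
  a ^+ 2 + a * g * t + g ^+ 2 * D = a' ^+ 2 + a' * g * t' + g ^+ 2 * D' ->
  exists k, [/\ a' = a + g * k, t = k *+ 2 + t' & D = k ^+ 2 + k * t' + D'].
Proof.
move=> g_neq0 trE detE.
have discrE : g ^+ 2 * (t ^+ 2 - 4 * D) = g ^+ 2 * (t' ^+ 2 - 4 * D').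
  transitivity ((a *+ 2 + g * t) ^+ 2 - 4 * (a ^+ 2 + a * g * t + g ^+ 2 * D)); first by ring.
  by rewrite trE detE; ring.
have {discrE} sqr_diff : t ^+ 2 - t' ^+ 2 = (D - D') * 4.
  by move: (mulfI (expf_neq0 2 g_neq0) discrE); lia.
have /dvdzP[k tE] : (2 %| t - t')%Z by apply/dvdz2_sub_of_sqr/dvdzP; exists (D - D').
have gtE : g * t = g * t' + g * k * 2 by rewrite -mulrA -tE; ring.
have sqrE : t ^+ 2 - t' ^+ 2 = (k ^+ 2 + k * t') * 4.
  by rewrite (_ : t = t' + k * 2); [ring | lia].
exists k; split; lia.
Qed.

Lemma eq_of_dvd_gt1 (g h : nat) :
  (forall k, (1 < k)%N -> (k %| g)%N = (k %| h)%N) -> g = h.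
Proof.
have dvd_of_same (u v : nat) :
    (forall k, (1 < k)%N -> (k %| u)%N = (k %| v)%N) -> (u %| v)%N.
  case: u => [|[|u]] same_dvd //; last by rewrite -same_dvd.
  case: v same_dvd => // v /(_ v.+2 isT); rewrite dvdn0 => /esym.
  by move=> /(dvdn_leq (ltn0Sn v)); rewrite ltnn.
by move=> same_dvd; apply/eqP; rewrite eqn_dvd !dvd_of_same // => k /same_dvd.
Qed.

Lemma invariants_of_redmx_conj (M M' : 'M[int]_2) :
  (forall n : nat, (2 <= n)%N -> mx_conj (redmx n M) (redmx n M')) ->
  [/\ \det M = \det M', \tr M = \tr M' & mgcd M = mgcd M'].
Proof.
move=> conjMM'; split.
- by apply: eq_intr_Zp => n /conjMM' /mx_conj_det; rewrite !det_redmx.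
- by apply: eq_intr_Zp => n /conjMM' /mx_conj_tr; rewrite !tr_redmx.
congr Posz; apply: eq_of_dvd_gt1 => k k_gt1; rewrite -!redmx_scalar //.
by apply/idP/idP; apply: mx_conj_scalar; [|apply: mx_conj_sym]; apply: conjMM'.
Qed.

Lemma scalar_affine_shift (a g k : int) (N : 'M[int]_2) :
  (a + g * k)%:M + g *: N = a%:M + g *: (k%:M + 1 *: N).
Proof. by rewrite scale1r scalerDr scale_scalar_mx raddfD addrA. Qed.

Lemma redmx_conj_of_invariants (M M' : 'M[int]_2) :
  [/\ \det M = \det M', \tr M = \tr M' & mgcd M = mgcd M'] ->
  forall n : nat, (2 <= n)%N -> mx_conj (redmx n M) (redmx n M').
Proof.
move=> [detE trE mgcdE] n n_gt1.
have [g0 | g_neq0] := eqVneq (mgcd M) 0.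
  have scalarE (A : 'M[int]_2) : mgcd A = 0 -> A = (A i0 i0)%:M.
    by move=> A0; rewrite {1}(primitive_partE A) A0 scale0r addr0.
  move: trE; rewrite (scalarE M) // (scalarE M') -?mgcdE // !mxtrace_scalar => trE.
  have -> : M i0 i0 = M' i0 i0 by lia.
  exact: mx_conj_refl.
move: detE trE; rewrite (primitive_partE M) (primitive_partE M') -mgcdE.
set a := M i0 i0; set N := primitive_part M; set N' := primitive_part M'.
rewrite !det_affine2 !tr_affine2 => detE trE.
have [k [-> trNE detNE]] := affine_params_shift g_neq0 trE detE.
rewrite scalar_affine_shift; apply: redmx_conj_affine => //.
- by rewrite mgcd_primitive_part ?coprimen1.
- by rewrite mgcd_affine mgcd_primitive_part -?mgcdE ?coprimen1.
- by rewrite tr_affine2 mul1r.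
- by rewrite det_affine2 mulr1 expr1n mul1r.
Qed.

Theorem theorem41 (M M' : 'M[int]_2) :
  (forall n : nat, (2 <= n)%N -> mx_conj (redmx n M) (redmx n M'))
  <->
  [/\ \det M = \det M', \tr M = \tr M' & mgcd M = mgcd M'].
Proof.
split; [exact: invariants_of_redmx_conj | exact: redmx_conj_of_invariants].
Qed.
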